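(* Let $G$ be a connected graph with at least $5$ vertices and let $H$ be a connected component of the complement $\overline{G}$ such that $H$ is isomorphic to the path $P_4$ on $4$ vertices. Then no vertex of $H$ is a basis forced vertex of $G$.
   Context: All graphs are finite and simple. $\overline{G}$ denotes the complement graph. For vertices $u,v$ of a connected graph $G$, $d(u,v)$ is the length of a shortest $u$–$v$ path. A set $R\subseteq V(G)$ is a resolving set if for all distinct $x,y\in V(G)$ there is $r\in R$ with $d(r,x)\neq d(r,y)$. The metric dimension $\dim(G)$ is the minimum cardinality of a resolving set, and a resolving set of cardinality $\dim(G)$ is a metric basis. A vertex is a basis forced vertex if it belongs to every metric basis of $G$. *)

From mathcomp Require Import all_boot.
Set Implicit Arguments. Unset Strict Implicit. Unset Printing Implicit Defensive.

Section Graphs.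
Variable T : finType.

Definition simple_graph (e : rel T) : Prop := symmetric e /\ irreflexive e.

Definition connected_graph (e : rel T) : Prop := forall x y, connect e x y.

Definition compl_graph (e : rel T) : rel T := fun x y => (x != y) && ~~ e x y.

Fixpoint ball (e : rel T) (x : T) (n : nat) : {set T} :=
  match n with
  | 0 => [set x]
  | n'.+1 => ball e x n' :|: [set y | [exists z in ball e x n', e z y]]
  end.

(* shortest-path distance: least n with y in ball e x n
   (meaningful for connected graphs, where it is < #|T|) *)
Definition dist (e : rel T) (x y : T) : nat :=
  find (fun n => y \in ball e x n) (iota 0 #|T|).

Definition resolving (e : rel T) (R : {set T}) : Prop :=
  forall x y, x != y -> exists2 r, r \in R & dist e r x != dist e r y.

Definition metric_basis (e : rel T) (R : {set T}) : Prop :=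
  resolving e R /\ forall R', resolving e R' -> #|R| <= #|R'|.

Definition basis_forced (e : rel T) (v : T) : Prop :=
  forall R, metric_basis e R -> v \in R.

Definition component (f : rel T) (C : {set T}) : Prop :=
  exists v, C = [set u | connect f v u].

Definition induced_P4 (f : rel T) (C : {set T}) : Prop :=
  exists g : 'I_4 -> T, [/\ injective g, C = g @: setT &
    forall i j : 'I_4, f (g i) (g j) = ((i.+1 == j) || (j.+1 == i))].
End Graphs.

From mathcomp Require Import all_boot.
Set Implicit Arguments. Unset Strict Implicit. Unset Printing Implicit Defensive.

(* Let a - b - c - d be the path induced by the complement on the component C.
   In G every vertex of C is adjacent to every vertex outside C, so a vertex
   outside C is at distance 1 from all of C, and two distinct vertices of C are
   at distance 2 if they are adjacent in the complement and 1 otherwise.  Hence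
   a resolving set meets C in at least two vertices (one vertex sees only the
   three distances 0, 1, 2 on the four vertices of C), and in any metric basis
   R one may replace R :&: C by {b, c} or by {a, d}: both pairs resolve C and
   separate C from the rest.  Every vertex of C misses one of these pairs. *)

Lemma card_in_inj_bounded (T : finType) (f : T -> nat) (A : {set T}) k :
  {in A &, injective f} -> {in A, forall x, f x <= k} -> #|A| <= k.+1.
Proof.
move=> f_inj f_bound; rewrite cardE -(size_map f) -[k.+1](size_iota 0).
apply: uniq_leq_size => [|_ /mapP[x xA ->]].
  by rewrite map_inj_in_uniq ?enum_uniq // => x y; rewrite !mem_enum; apply: f_inj.
by rewrite mem_iota ltnS f_bound // -mem_enum.
Qed.

Section Distance.
Variables (T : finType) (e : rel T).
Implicit Types (x y w : T).

Lemma dist_eq0 x y : (dist e x y == 0) = (x == y).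
Proof.
rewrite /dist; have : 0 < #|T| by apply/card_gt0P; exists x.
by case: #|T| => //= n _; rewrite inE (eq_sym y); case: (x == y).
Qed.

Lemma dist_first_ball x y n : n < #|T| -> y \in ball e x n ->
  (forall m, m < n -> y \notin ball e x m) -> dist e x y = n.
Proof.
move=> ltnT yn ym; rewrite /dist -(subnKC (ltnW ltnT)) iotaD find_cat size_iota.
have -> : has (fun m => y \in ball e x m) (iota 0 n) = false.
  by apply/hasPn => m; rewrite mem_iota => /andP[_ /ym].
by move: ltnT; rewrite -subn_gt0; case: (_ - _) => //= k _; rewrite yn addn0.
Qed.

Lemma mem_ball1 x y : (y \in ball e x 1) = (y == x) || e x y.
Proof.
rewrite /= !inE; congr (_ || _); apply/existsP/idP => [[z /andP[]]|exy].
  by rewrite inE => /eqP ->.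
by exists x; rewrite inE eqxx.
Qed.

Lemma dist_edge x y : x != y -> e x y -> dist e x y = 1.
Proof.
move=> neq_xy exy; apply: dist_first_ball => [||[|//] _].
- by apply: leq_trans (max_card [set x; y]); rewrite cards2 neq_xy.
- by rewrite mem_ball1 exy orbT.
- by rewrite inE eq_sym.
Qed.

Lemma dist_two x y w : x != y -> ~~ e x y -> e x w -> e w y -> dist e x y = 2.
Proof.
move=> neq_xy nexy exw ewy.
have neq_wx : w != x by apply: contraNneq nexy => <-.
have neq_wy : w != y by apply: contraNneq nexy => <-.
apply: dist_first_ball => [||[|[|//]] _].
- apply: leq_trans (max_card (w |: [set x; y])).
  by rewrite cardsU1 cards2 neq_xy !inE negb_or neq_wx neq_wy.
- rewrite /= inE; apply/orP; right; rewrite inE; apply/existsP; exists w.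
  by rewrite -/(ball e x 1) mem_ball1 exw orbT ewy.
- by rewrite inE eq_sym.
- by rewrite mem_ball1 eq_sym negb_or neq_xy.
Qed.

Definition resolvingb (R : {set T}) :=
  [forall x, forall y, (x != y) ==> [exists r in R, dist e r x != dist e r y]].

Lemma resolvingP R : reflect (resolving e R) (resolvingb R).
Proof.
apply: (iffP forallP) => [resR x y neq_xy | resR x].
  move/forallP: (resR x) => /(_ y) /implyP /(_ neq_xy) /existsP[r /andP[rR neq_d]].
  by exists r.
apply/forallP => y; apply/implyP => /resR[r rR neq_d].
by apply/existsP; exists r; rewrite rR.
Qed.

Lemma resolving_setT : resolving e setT.
Proof.
move=> x y neq_xy; exists x; first by rewrite inE.
have /eqP -> : dist e x x == 0 by rewrite dist_eq0.
by rewrite eq_sym dist_eq0.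
Qed.

Lemma metric_basis_exists : exists R, metric_basis e R.
Proof.
have /resolvingP resT := resolving_setT.
have [R /resolvingP resR R_min] := arg_minnP (fun R : {set T} => #|R|) resT.
by exists R; split=> // R' /resolvingP; apply: R_min.
Qed.

End Distance.

Lemma compl_component_joined (T : finType) (e : rel T) (C : {set T}) :
  component (compl_graph e) C -> forall x w, x \in C -> w \notin C -> e x w.
Proof.
move=> [v ->] x w; rewrite !inE => vx; apply: contraNT => nexw.
have [<- // | neq_xw] := eqVneq x w.
by apply: connect_trans vx (connect1 _); rewrite /compl_graph neq_xw.
Qed.

(* Not the distance in P_4: this is the distance in G between the vertices of
   a P_4 of the complement that is joined to the rest of G. *)
Definition p4_dist (i j : 'I_4) : nat :=
  if i == j then 0 else if (i.+1 == j) || (j.+1 == i) then 2 else 1.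

Lemma P4_landmarks (v : 'I_4) : exists s t : 'I_4, [/\ s != v, t != v,
  forall i j, i != j -> (p4_dist s i != p4_dist s j) || (p4_dist t i != p4_dist t j)
  & forall i, (p4_dist s i != 1) || (p4_dist t i != 1)].
Proof.
case: v => [[|[|[|[|//]]]] ?];
  [exists (@Ordinal 4 1 isT), (@Ordinal 4 2 isT) | exists ord0, ord_max
  | exists ord0, ord_max | exists (@Ordinal 4 1 isT), (@Ordinal 4 2 isT)]; split=> //.
all: first [ by move=> [[|[|[|[|//]]]] ?] [[|[|[|[|//]]]] ?]
           | by move=> [[|[|[|[|//]]]] ?] ].
Qed.

Section JoinedSet.
Variables (T : finType) (e : rel T) (C : {set T}) (w0 : T).
Hypotheses (e_sym : symmetric e) (w0_notin_C : w0 \notin C).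
Hypothesis C_joined : forall x w, x \in C -> w \notin C -> e x w.

Lemma dist_out_in w x : w \notin C -> x \in C -> dist e w x = 1.
Proof.
move=> wC xC; apply: dist_edge; last by rewrite e_sym C_joined.
by apply: contraNneq wC => ->.
Qed.

Lemma dist_in_out x w : x \in C -> w \notin C -> dist e x w = 1.
Proof.
move=> xC wC; apply: dist_edge; last exact: C_joined.
by apply: contraNneq wC => <-.
Qed.

Lemma dist_in x y : x \in C -> y \in C ->
  dist e x y = if x == y then 0 else if e x y then 1 else 2.
Proof.
move=> xC yC; have [<-|neq_xy] := eqVneq x y; first by apply/eqP; rewrite dist_eq0.
case: ifP => exy; first exact: dist_edge.
apply: (dist_two (w := w0)) => //; first by rewrite exy.
  exact: C_joined.
by rewrite e_sym C_joined.
Qed.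

Lemma resolving_meet_gt1 R : resolving e R -> 3 < #|C| -> 1 < #|R :&: C|.
Proof.
move=> resR C_gt3; rewrite ltnNge; apply/negP => /card_le1_eqP RC_le1.
have resolver_in x y : x \in C -> y \in C -> x != y ->
    exists2 r, r \in R :&: C & dist e r x != dist e r y.
  move=> xC yC /resR[r rR neq_d]; exists r => //; rewrite inE rR andTb.
  by apply: contraNT neq_d => rC; rewrite !dist_out_in.
have /card_gt1P[a [b [aC bC /(resolver_in _ _ aC bC)[r rRC _]]]] : 1 < #|C|.
  exact: leq_trans C_gt3.
suff : #|C| <= 3 by rewrite leqNgt C_gt3.
apply: (@card_in_inj_bounded _ (dist e r)) => [x y xC yC eq_d | x xC].
  have [// | /(resolver_in _ _ xC yC)[r' r'RC]] := eqVneq x y.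
  by rewrite (RC_le1 _ _ rRC r'RC) eq_d eqxx.
have rC : r \in C by case/setIP: rRC.
by rewrite dist_in //; case: ifP => //; case: ifP.
Qed.

Lemma basis_exchange (R S : {set T}) :
  metric_basis e R -> S \subset C -> #|S| <= #|R :&: C| ->
  (forall x y, x \in C -> y \in C -> x != y ->
     exists2 r, r \in S & dist e r x != dist e r y) ->
  (forall x, x \in C -> exists2 r, r \in S & dist e r x != 1) ->
  metric_basis e ((R :\: C) :|: S).
Proof.
move=> [resR R_min] SC S_small S_res S_sep; split=> [x y neq_xy | R' /R_min].
  have [xC | xC] := boolP (x \in C); have [yC | yC] := boolP (y \in C).
  - by have [r rS] := S_res x y xC yC neq_xy; exists r; rewrite // inE rS orbT.
  - have [r rS] := S_sep x xC; exists r; first by rewrite inE rS orbT.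
    by rewrite (dist_in_out (subsetP SC r rS) yC).
  - have [r rS] := S_sep y yC; exists r; first by rewrite inE rS orbT.
    by rewrite (dist_in_out (subsetP SC r rS) xC) eq_sym.
  - have [r rR neq_d] := resR x y neq_xy; exists r => //.
    have [rC | rC] := boolP (r \in C); first by rewrite !dist_in_out in neq_d.
    by rewrite !inE rC rR.
apply: leq_trans; apply: leq_trans (leq_card_setU _ _) _.
by rewrite -(cardsID C R) addnC leq_add2r.
Qed.

Lemma dist_induced_P4 (g : 'I_4 -> T) : injective g -> (forall i, g i \in C) ->
  (forall i j, compl_graph e (g i) (g j) = (i.+1 == j) || (j.+1 == i)) ->
  forall i j, dist e (g i) (g j) = p4_dist i j.
Proof.
move=> g_inj gC g_adj i j; rewrite dist_in // /p4_dist (inj_eq g_inj).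
case: eqP => // /eqP neq_ij; rewrite -g_adj /compl_graph (inj_eq g_inj) neq_ij.
by case: (e _ _).
Qed.

Lemma induced_P4_not_forced (g : 'I_4 -> T) : injective g -> C = g @: setT ->
  (forall i j, compl_graph e (g i) (g j) = (i.+1 == j) || (j.+1 == i)) ->
  forall v, v \in C -> ~ basis_forced e v.
Proof.
move=> g_inj C_def g_adj v; rewrite {1}C_def => /imsetP[i _ ->] forced.
have gC j : g j \in C by rewrite C_def imset_f.
have dist_g := dist_induced_P4 g_inj gC g_adj.
have [s [t [neq_si neq_ti res_st sep_st]]] := P4_landmarks i.
have [R basisR] := metric_basis_exists e.
have SC : [set g s; g t] \subset C by apply/subsetP => x; rewrite !inE => /orP[] /eqP->.
have S_small : #|[set g s; g t]| <= #|R :&: C|.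
  apply: leq_trans (resolving_meet_gt1 basisR.1 _); first by rewrite cards2 ltnS leq_b1.
  by rewrite C_def card_imset // cardsT card_ord.
have S_res x y : x \in C -> y \in C -> x != y ->
    exists2 r, r \in [set g s; g t] & dist e r x != dist e r y.
  rewrite C_def => /imsetP[j _ ->] /imsetP[k _ ->]; rewrite (inj_eq g_inj).
  move=> /res_st /orP[]; [exists (g s) | exists (g t)];
    by rewrite ?dist_g ?inE ?eqxx ?orbT.
have S_sep x : x \in C -> exists2 r, r \in [set g s; g t] & dist e r x != 1.
  rewrite C_def => /imsetP[j _ ->].
  case/orP: (sep_st j); [exists (g s) | exists (g t)];
    by rewrite ?dist_g ?inE ?eqxx ?orbT.
have := forced _ (basis_exchange basisR SC S_small S_res S_sep).
by rewrite !inE gC !(inj_eq g_inj) !(eq_sym i) (negbTE neq_si) (negbTE neq_ti).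
Qed.

End JoinedSet.

Theorem lemma7 (T : finType) (e : rel T) (C : {set T}) :
  simple_graph e -> connected_graph e -> 5 <= #|T| ->
  component (compl_graph e) C -> induced_P4 (compl_graph e) C ->
  forall v, v \in C -> ~ basis_forced e v.
Proof.
move=> [e_sym _] _ T_ge5 compC [g [g_inj C_def g_adj]].
have /subsetPn[w0 _ w0C] : ~~ ([set: T] \subset C).
  apply: contraL T_ge5 => /subset_leq_card.
  by rewrite cardsT C_def card_imset // cardsT card_ord -leqNgt.
have C_joined := compl_component_joined compC.
move=> v; exact: (induced_P4_not_forced e_sym w0C C_joined g_inj C_def g_adj).
Qed.
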